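(* Let $L\ge 3$ be an integer and $\lambda>0$. For every $\bm a=a_1\cdots a_L\in\{0,1\}^L$ with $\mathrm{wt}(\bm a)=2$, let $\Lambda(\bm a)$ be the largest eigenvalue of the operator $\hat P_{\bm a}(\hat\Pi^{(\mathrm{ph})}_{\bm a}-\lambda\hat\Pi)\hat P_{\bm a}$ restricted to the two-dimensional subspace $\mathrm{span}\{|i\rangle: a_i=1\}$, and let $\Omega^{(1)}_+(\lambda):=\max_{\bm a:\,\mathrm{wt}(\bm a)=2}\Lambda(\bm a)$. Then $$\Omega^{(1)}_+(\lambda)=\frac{3-2\lambda+\sqrt{1+2\lambda^2}}{4},$$ and this quantity is non-negative if $\lambda\le 3+\sqrt5$.
   Context: Work in $\mathbb C^L$ with orthonormal basis $\{|1\rangle,\dots,|L\rangle\}$; $\hat P(|\psi\rangle)=|\psi\rangle\langle\psi|$ and $\delta$ is the Kronecker delta. For $\bm a\in\{0,1\}^L$, $\mathrm{wt}(\bm a)$ is the number of $1$'s. $\hat\Pi$ is the real symmetric tridiagonal $L\times L$ matrix with $\langle i|\hat\Pi|i\rangle=1/2$ for $1\le i\le L$, $\langle i|\hat\Pi|i+1\rangle=\langle i+1|\hat\Pi|i\rangle=-1/(2\sqrt2)$ for $i\in\{1,L-1\}$, and $\langle i|\hat\Pi|i+1\rangle=\langle i+1|\hat\Pi|i\rangle=-1/4$ for $2\le i\le L-2$ (all other entries zero). For $\bm a\in\{0,1\}^L$, $\hat\Pi^{(\mathrm{ph})}_{\bm a}$ is the diagonal operator $$\hat\Pi^{(\mathrm{ph})}_{\bm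 a}=\delta_{a_2,1}\hat P(|1\rangle)+\sum_{i=2}^{L-1}\frac{\delta_{a_{i-1},1}+\delta_{a_{i+1},1}}{2}\hat P(|i\rangle)+\delta_{a_{L-1},1}\hat P(|L\rangle),$$ and $\hat P_{\bm a}=\sum_{i=1}^L\delta_{a_i,1}\hat P(|i\rangle)$. *)

(* over an abstract R : realType. Indices are 0-based: 'I_L. *)
From HB Require Import structures.
From mathcomp Require Import all_boot all_order all_algebra.
From mathcomp Require Import reals.
Set Implicit Arguments. Unset Strict Implicit. Unset Printing Implicit Defensive.
Import Order.TTheory GRing.Theory Num.Theory.
Local Open Scope ring_scope.

Section Defs.
Variables (R : realType) (L : nat).

Definition wt (a : 'I_L -> bool) : nat := #|[set i | a i]|.

(* the bit a_{k+1} (0-based k) as a real number 0/1; 0 outside the range *)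
Definition abit (a : 'I_L -> bool) (k : nat) : R :=
  match (insub k : option 'I_L) with Some i => (a i)%:R | None => 0 end.

(* hat Pi : tridiagonal; 1-based bond (i,i+1) with i in {1, L-1} has
   weight -1/(2 sqrt 2), others -1/4.  0-based: min index k in {0, L-2}. *)
Definition Pi_mx : 'M[R]_L :=
  \matrix_(i, j)
    if i == j then 1 / 2
    else if (j == i.+1 :> nat) || (i == j.+1 :> nat) then
      (let k := minn i j in
       if (k == 0)%N || (k == L - 2)%N then - 1 / (2 * Num.sqrt 2) else - 1 / 4)
    else 0.

Definition Piph_mx (a : 'I_L -> bool) : 'M[R]_L :=
  \matrix_(i, j)
    if i == j then
      (if (i == 0 :> nat) then abit a 1
       else if (i == L.-1 :> nat) then abit a (L - 2)
       else (abit a i.-1 + abit a i.+1) / 2)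
    else 0.

Definition P_mx (a : 'I_L -> bool) : 'M[R]_L :=
  \matrix_(i, j) if i == j then (a i)%:R else 0.

Definition A_op (lam : R) (a : 'I_L -> bool) : 'M[R]_L :=
  P_mx a *m (Piph_mx a - lam *: Pi_mx) *m P_mx a.

Definition eigval_on (a : 'I_L -> bool) (A : 'M[R]_L) (mu : R) : Prop :=
  exists v : 'cV[R]_L,
    [/\ v != 0, (forall i, ~~ a i -> v i 0 = 0) & A *m v = mu *: v].

Definition is_Lambda (lam : R) (a : 'I_L -> bool) (x : R) : Prop :=
  eigval_on a (A_op lam a) x /\
  (forall mu, eigval_on a (A_op lam a) mu -> mu <= x).

Definition is_Omega1 (lam : R) (w : R) : Prop :=
  [/\ (forall a, wt a = 2%N -> exists x, is_Lambda lam a x),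
      (exists a, wt a = 2%N /\ is_Lambda lam a w) &
      (forall a x, wt a = 2%N -> is_Lambda lam a x -> x <= w)].

End Defs.

From mathcomp Require Import all_boot all_order all_algebra.
From mathcomp Require Import reals.
From mathcomp Require Import ring lra zify.

Set Implicit Arguments.
Unset Strict Implicit.
Unset Printing Implicit Defensive.
Import Order.TTheory GRing.Theory Num.Theory.
Local Open Scope ring_scope.

(* On the support {p, q} of a the operator acts as the symmetric matrix
   [[al, c], [c, be]] with al = pi_p - lam/2, be = pi_q - lam/2 and
   c = -lam Pi_pq, where pi_i is the diagonal entry of Pi^(ph)_a. Its
   eigenvalues are the roots of (al - mu)(be - mu) = c^2, the largest being
   (al + be)/2 + sqrt(((al - be)/2)^2 + c^2). For non-adjacent sites c = 0 and
   al = be = -lam/2; for adjacent interior sites al = be = 1/2 - lam/2 and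
   |c| = lam/4; for the two end pairs one diagonal entry is 1 - lam/2, the
   other 1/2 - lam/2 and c^2 = lam^2/8, which yields exactly
   (3 - 2 lam + sqrt(1 + 2 lam^2))/4. This value dominates the other two
   because sqrt(1 + 2 lam^2) >= |lam|. *)

Section TopEigenvalue.
Variable R : rcfType.

Definition top_eig (al be c : R) : R :=
  (al + be) / 2 + Num.sqrt (((al - be) / 2) ^+ 2 + c ^+ 2).

Lemma top_eig_root al be c :
  (al - top_eig al be c) * (be - top_eig al be c) = c ^+ 2.
Proof.
rewrite /top_eig; set r := Num.sqrt _.
have r2 : r ^+ 2 = ((al - be) / 2) ^+ 2 + c ^+ 2.
  by rewrite sqr_sqrtr // addr_ge0 ?sqr_ge0.
have -> : (al - ((al + be) / 2 + r)) * (be - ((al + be) / 2 + r))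
          = r ^+ 2 - ((al - be) / 2) ^+ 2 by field.
by rewrite r2 addrC addKr.
Qed.

Lemma root_le_top_eig al be c mu :
  (al - mu) * (be - mu) = c ^+ 2 -> mu <= top_eig al be c.
Proof.
move=> root_mu; rewrite /top_eig.
have -> : ((al - be) / 2) ^+ 2 + c ^+ 2 = (mu - (al + be) / 2) ^+ 2.
  by rewrite -root_mu; field.
rewrite sqrtr_sqr; have := ler_norm (mu - (al + be) / 2); lra.
Qed.

Lemma top_eig_diag al c : top_eig al al c = al + `|c|.
Proof.
by rewrite /top_eig subrr mul0r expr0n add0r sqrtr_sqr; field.
Qed.

Definition Omega1 (lam : R) : R := (3 - 2 * lam + Num.sqrt (1 + 2 * lam ^+ 2)) / 4.

Lemma normr_le_sqrt_1_plus_2sqr (lam : R) : `|lam| <= Num.sqrt (1 + 2 * lam ^+ 2).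
Proof.
have lam2_ge0 := sqr_ge0 lam; rewrite -sqrtr_sqr ler_sqrt; lra.
Qed.

Lemma top_eig_edge (lam al be c : R) :
  al + be = 3 / 2 - lam -> (al - be) ^+ 2 = 1 / 4 -> c ^+ 2 = lam ^+ 2 / 8 ->
  top_eig al be c = Omega1 lam.
Proof.
move=> sum_ab diff_ab c2; rewrite /top_eig /Omega1.
have -> : ((al - be) / 2) ^+ 2 + c ^+ 2 = (1 + 2 * lam ^+ 2) * (1 / 4) ^+ 2.
  by rewrite c2 expr_div_n diff_ab; field.
have lam2_ge0 := sqr_ge0 lam.
rewrite sum_ab sqrtrM; last by lra.
by rewrite sqrtr_sqr ger0_norm; [field | lra].
Qed.

Lemma Omega1_ge0 (lam : R) : lam <= 3 + Num.sqrt 5 -> 0 <= Omega1 lam.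
Proof.
move=> lam_le; rewrite /Omega1 pmulr_lge0 ?invr_gt0 //.
have [lam_small|lam_big] := lerP lam (3 / 2).
  by have := sqrtr_ge0 (1 + 2 * lam ^+ 2); lra.
have [r0 r2] : 0 <= Num.sqrt 5 :> R /\ Num.sqrt 5 ^+ 2 = 5 :> R.
  by rewrite sqrtr_ge0 sqr_sqrtr ?ler0n.
have r_ge : 3 / 2 <= Num.sqrt 5 :> R by nra.
(* For lam >= 3/2, lam <= 3 + sqrt 5 amounts to (2 lam - 3)^2 <= 1 + 2 lam^2. *)
have sq_le : (2 * lam - 3) ^+ 2 <= 1 + 2 * lam ^+ 2.
  have : 0 <= (Num.sqrt 5 - (lam - 3)) * (Num.sqrt 5 + (lam - 3)).
    by apply: mulr_ge0; lra.
  nra.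
have := ler_wsqrtr sq_le; rewrite sqrtr_sqr ger0_norm; lra.
Qed.

End TopEigenvalue.

Lemma singular2_kernel (F : fieldType) (m11 m12 m21 m22 : F) :
  m11 * m22 = m12 * m21 ->
  exists x y : F, [/\ (x != 0) || (y != 0),
    m11 * x + m12 * y = 0 & m21 * x + m22 * y = 0].
Proof.
move=> det0.
have [/andP [/eqP m11_0 /eqP m12_0] | nz1] := boolP ((m11 == 0) && (m12 == 0)).
  have [/andP [/eqP m21_0 /eqP m22_0] | nz2] := boolP ((m21 == 0) && (m22 == 0)).
    by exists 1, 0; rewrite oner_eq0 m11_0 m12_0 m21_0 m22_0; split => //; ring.
  exists m22, (- m21); split; last by ring.
    by rewrite oppr_eq0 orbC -negb_and.
  by rewrite m11_0 m12_0; ring.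
exists m12, (- m11); split; first by rewrite oppr_eq0 orbC -negb_and.
  by ring.
by rewrite mulrN mulrC -det0 mulrC subrr.
Qed.

Section OperatorEntries.
Variables (R : realType) (L : nat) (lam : R) (a : 'I_L -> bool).

Lemma A_opE i j :
  A_op lam a i j = (a i)%:R * (Piph_mx R a i j - lam * Pi_mx R L i j) * (a j)%:R.
Proof.
rewrite /A_op !mxE (bigD1 j) //= big1 => [|k kj]; last first.
  by rewrite [P_mx R a k j]mxE (negbTE kj) mulr0.
rewrite addr0 [P_mx R a j j]mxE eqxx !mxE (bigD1 i) //= big1 => [|k ki]; last first.
  by rewrite mxE eq_sym (negbTE ki) mul0r.
by rewrite addr0 mxE eqxx !mxE.
Qed.

Lemma Pi_mx_sym i j : Pi_mx R L i j = Pi_mx R L j i.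
Proof. by rewrite !mxE eq_sym orbC minnC. Qed.

Lemma A_op_sym i j : A_op lam a i j = A_op lam a j i.
Proof.
rewrite !A_opE Pi_mx_sym [Piph_mx R a i j]mxE [Piph_mx R a j i]mxE eq_sym.
by case: eqP => [->|_]; ring.
Qed.

Lemma A_op_out i j : ~~ a i -> A_op lam a i j = 0.
Proof. by rewrite A_opE => /negbTE ->; rewrite !mul0r. Qed.

Lemma A_op_diag i : a i -> A_op lam a i i = Piph_mx R a i i - lam / 2.
Proof.
by rewrite A_opE [Pi_mx R L i i]mxE eqxx => ->; rewrite /= mulr1n mul1r mulr1; field.
Qed.

Lemma A_op_offdiag i j :
  i != j -> a i -> a j -> A_op lam a i j = - lam * Pi_mx R L i j.
Proof.
move=> ij ai aj; rewrite A_opE ai aj [Piph_mx R a i j]mxE (negbTE ij) /=.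
by rewrite mulr1n mul1r mulr1 sub0r mulNr.
Qed.

End OperatorEntries.

Section ActionOnSupport.
Variables (R : realType) (L : nat) (a : 'I_L -> bool) (p q : 'I_L).
Hypotheses (p_neq_q : p != q) (a_pq : forall i, a i = (i == p) || (i == q)).

Lemma mulmx_support (A : 'M[R]_L) (v : 'cV[R]_L) i :
  (forall k, ~~ a k -> v k 0 = 0) -> (A *m v) i 0 = A i p * v p 0 + A i q * v q 0.
Proof.
move=> v_supp; rewrite mxE (bigD1 p) //= (bigD1 q) /=; last by rewrite eq_sym.
rewrite big1 ?addr0 ?addrA // => k /andP [kp kq].
by rewrite v_supp ?mulr0 // a_pq negb_or kp.
Qed.

Lemma eigval_on_char (A : 'M[R]_L) mu :
  eigval_on a A mu -> (A p p - mu) * (A q q - mu) = A p q * A q p.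
Proof.
case=> v [v_neq0 v_supp Av].
have Av_at i : A i p * v p 0 + A i q * v q 0 = mu * v i 0.
  by rewrite -mulmx_support // Av mxE.
have := Av_at p; have := Av_at q.
set x := v p 0; set y := v q 0 => Av_q Av_p.
set D := (A p p - mu) * (A q q - mu) - A p q * A q p.
have Dx : D * x = 0.
  have -> : D * x = (A q q - mu) * (A p p * x + A p q * y - mu * x)
                    - A p q * (A q p * x + A q q * y - mu * y) by rewrite /D; ring.
  by rewrite Av_p Av_q; ring.
have Dy : D * y = 0.
  have -> : D * y = (A p p - mu) * (A q p * x + A q q * y - mu * y)
                    - A q p * (A p p * x + A p q * y - mu * x) by rewrite /D; ring.
  by rewrite Av_p Av_q; ring.
apply/eqP; rewrite -subr_eq0 -/D; apply: contraR v_neq0 => D_neq0.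
have /eqP x0 : x == 0 by move/eqP: Dx; rewrite mulf_eq0 (negbTE D_neq0).
have /eqP y0 : y == 0 by move/eqP: Dy; rewrite mulf_eq0 (negbTE D_neq0).
apply/eqP/matrixP => i j; rewrite (ord1 j) mxE.
by case: (boolP (a i)) => [|/v_supp //]; rewrite a_pq => /orP [] /eqP ->.
Qed.

Lemma char_eigval_on (A : 'M[R]_L) mu :
  (forall i j, ~~ a i -> A i j = 0) ->
  (A p p - mu) * (A q q - mu) = A p q * A q p -> eigval_on a A mu.
Proof.
move=> A_out /singular2_kernel [x [y [xy_neq0 eq_p eq_q]]].
pose v : 'cV[R]_L := \col_i (if i == p then x else if i == q then y else 0).
have vp : v p 0 = x by rewrite mxE eqxx.
have vq : v q 0 = y by rewrite mxE eq_sym (negbTE p_neq_q) eqxx.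
have v_supp k : ~~ a k -> v k 0 = 0.
  by rewrite a_pq negb_or => /andP [/negbTE kp /negbTE kq]; rewrite mxE kp kq.
exists v; split => //.
  by apply: contraTneq xy_neq0 => v0; rewrite -vp -vq v0 !mxE eqxx.
apply/matrixP => i j; rewrite (ord1 j) mulmx_support // vp vq [RHS]mxE.
case: (boolP (a i)) => [|ai]; last by rewrite v_supp // !A_out // !mul0r mulr0 addr0.
by rewrite a_pq => /orP [] /eqP ->; rewrite ?vp ?vq; lra.
Qed.

Lemma is_Lambda_top_eig (lam : R) :
  is_Lambda lam a (top_eig (A_op lam a p p) (A_op lam a q q) (A_op lam a p q)).
Proof.
have sym_qp : A_op lam a q p = A_op lam a p q by rewrite A_op_sym.
split.
  apply: char_eigval_on; first exact: A_op_out.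
  by rewrite sym_qp -expr2 top_eig_root.
by move=> mu /eigval_on_char; rewrite sym_qp -expr2 => /root_le_top_eig.
Qed.

End ActionOnSupport.

Section PairEntries.
Variables (R : realType) (L : nat) (a : 'I_L -> bool) (p q : 'I_L).
Hypotheses (L_ge3 : (3 <= L)%N) (p_lt_q : (p < q)%N).
Hypothesis a_pq : forall i, a i = (i == p) || (i == q).

Lemma abit_pair k : abit R a k = ((k == p) || (k == q))%:R.
Proof.
rewrite /abit; case: insubP => [i _ <-|k_ge]; first by rewrite a_pq.
have := ltn_ord p; have := ltn_ord q.
by do 2 case: eqP => //; lia.
Qed.

Lemma Piph_pair_p : Piph_mx R a p p =
  if q == p.+1 :> nat then (if p == 0 :> nat then 1 else 1 / 2) else 0.
Proof.
have := ltn_ord q; rewrite mxE eqxx !abit_pair.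
case: (eqVneq (p : nat) 0) => [-> | p_neq0] q_lt /=; first by rewrite eq_sym; case: eqP.
have -> : (p == L.-1 :> nat) = false by apply/eqP; lia.
have -> : (p.-1 == p :> nat) = false by apply/eqP; lia.
have -> : (p.-1 == q :> nat) = false by apply/eqP; lia.
have -> : (p.+1 == p :> nat) = false by apply/eqP; lia.
by rewrite eq_sym; case: eqP => _; rewrite /= ?add0r ?mul0r.
Qed.

Lemma Piph_pair_q : Piph_mx R a q q =
  if q == p.+1 :> nat then (if q == L.-1 :> nat then 1 else 1 / 2) else 0.
Proof.
have := ltn_ord q; rewrite mxE eqxx !abit_pair.
have -> : (q == 0 :> nat) = false by apply/eqP; lia.
case: (eqVneq (q : nat) L.-1) => [q_last | q_nlast] q_lt.
  have -> : ((L - 2)%N == q :> nat) = false by apply/eqP; lia.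
  by rewrite orbF; do 2 case: eqP => //; lia.
have -> : (q.-1 == q :> nat) = false by apply/eqP; lia.
have -> : (q.+1 == q :> nat) = false by apply/eqP; lia.
have -> : (q.+1 == p :> nat) = false by apply/eqP; lia.
by rewrite orbF addr0; do 2 case: eqP => //; rewrite ?mul0r //; lia.
Qed.

Lemma Pi_pair : Pi_mx R L p q =
  if q == p.+1 :> nat then
    (if (p == 0 :> nat) || (q == L.-1 :> nat) then - 1 / (2 * Num.sqrt 2) else - 1 / 4)
  else 0.
Proof.
rewrite mxE.
have -> : (p == q) = false by apply/eqP => pq; move: p_lt_q; rewrite pq ltnn.
have -> : (p == q.+1 :> nat) = false by apply/eqP; lia.
rewrite orbF (minn_idPl (ltnW p_lt_q)); case: eqP => // q_next /=.
by have -> : (p == (L - 2)%N :> nat) = (q == L.-1 :> nat) by apply/eqP/eqP; lia.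
Qed.

Variable lam : R.

Let Lambda := top_eig (A_op lam a p p) (A_op lam a q q) (A_op lam a p q).

Let p_neq_q : p != q.
Proof. by rewrite -val_eqE neq_ltn p_lt_q. Qed.

Lemma is_Lambda_pair : is_Lambda lam a Lambda.
Proof. exact: is_Lambda_top_eig. Qed.

Lemma Lambda_pairE :
  Lambda = top_eig (Piph_mx R a p p - lam / 2) (Piph_mx R a q q - lam / 2)
                   (- lam * Pi_mx R L p q).
Proof. by rewrite /Lambda !A_op_diag ?A_op_offdiag // !a_pq !eqxx ?orbT.
Qed.

Lemma Lambda_pair_edge :
  q = p.+1 :> nat -> (p == 0 :> nat) || (q == L.-1 :> nat) -> Lambda = Omega1 lam.
Proof.
move=> q_next edge; have q_lt := ltn_ord q.
rewrite Lambda_pairE Piph_pair_p Piph_pair_q Pi_pair edge.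
have -> : (q == p.+1 :> nat) by apply/eqP.
have [sqrt2_gt0 sqrt2_sq] : 0 < Num.sqrt 2 :> R /\ Num.sqrt 2 ^+ 2 = 2 :> R.
  by rewrite sqrtr_gt0 sqr_sqrtr ?ltr0n ?ler0n.
have c_sq : (- lam * (- 1 / (2 * Num.sqrt 2))) ^+ 2 = lam ^+ 2 / 8.
  by rewrite !(exprMn, exprVn) sqrt2_sq; field.
case/orP: edge => [/eqP p0 | /eqP q_last].
  have -> : (q == L.-1 :> nat) = false by apply/eqP; lia.
  by rewrite p0 eqxx; apply: top_eig_edge => //; field.
have -> : (p == 0 :> nat) = false by apply/eqP; lia.
by rewrite q_last eqxx; apply: top_eig_edge => //; field.
Qed.

Lemma Lambda_pair_le : Lambda <= Omega1 lam.
Proof.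
have sqrt_ge := normr_le_sqrt_1_plus_2sqr lam; have := normr_ge0 lam.
have [q_next | q_nnext] := eqVneq (q : nat) p.+1; last first.
  rewrite Lambda_pairE Piph_pair_p Piph_pair_q Pi_pair (negbTE q_nnext).
  rewrite mulr0 top_eig_diag normr0 addr0 /Omega1; lra.
have [edge | interior] := boolP ((p == 0 :> nat) || (q == L.-1 :> nat)).
  by rewrite Lambda_pair_edge.
move: interior; rewrite negb_or => /andP [/negbTE p_neq0 /negbTE q_nlast].
rewrite Lambda_pairE Piph_pair_p Piph_pair_q Pi_pair q_next eqxx p_neq0.
rewrite -q_next q_nlast /= top_eig_diag.
have -> : `|- lam * (- 1 / 4)| = `|lam| / 4.
  have -> : - lam * (- 1 / 4) = lam / 4 by field.
  by rewrite normrM normfV normr_nat.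
rewrite /Omega1; lra.
Qed.

End PairEntries.

Lemma wt_eq2_support (L : nat) (a : 'I_L -> bool) : wt a = 2%N ->
  exists p q : 'I_L, (p < q)%N /\ forall i, a i = (i == p) || (i == q).
Proof.
move=> /eqP /cards2P [x [y [x_neq_y a_xy]]].
have a_eq i : a i = (i == x) || (i == y) by rewrite -in_set2 -a_xy inE.
case: (ltngtP x y) => [x_lt_y | y_lt_x | xy]; first by exists x, y.
  by exists y, x; split => // i; rewrite orbC.
by move: x_neq_y; rewrite -val_eqE /= xy eqxx.
Qed.

Lemma wt_pair (L : nat) (p q : 'I_L) :
  p != q -> wt (fun i => (i == p) || (i == q)) = 2%N.
Proof.
move=> p_neq_q; rewrite /wt; have -> : [set i | (i == p) || (i == q)] = [set p; q].
  by apply/setP => i; rewrite !inE.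
by rewrite cards2 p_neq_q.
Qed.

Theorem lemma1 (R : realType) (L : nat) (lam : R) :
  (3 <= L)%N -> 0 < lam ->
  is_Omega1 L lam ((3 - 2 * lam + Num.sqrt (1 + 2 * lam ^+ 2)) / 4) /\
  (lam <= 3 + Num.sqrt 5 -> 0 <= (3 - 2 * lam + Num.sqrt (1 + 2 * lam ^+ 2)) / 4).
Proof.
move=> L_ge3 _.
change (is_Omega1 L lam (Omega1 lam) /\ (lam <= 3 + Num.sqrt 5 -> 0 <= Omega1 lam)).
split; last exact: Omega1_ge0.
split.
- move=> a /wt_eq2_support [p [q [p_lt_q a_pq]]].
  by eexists; exact: is_Lambda_pair p_lt_q a_pq lam.
- pose p : 'I_L := Ordinal (ltnW (ltnW L_ge3)); pose q : 'I_L := Ordinal (ltnW L_ge3).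
  have p_lt_q : (p < q)%N by [].
  pose a i := (i == p) || (i == q); have a_pq i : a i = (i == p) || (i == q) by [].
  exists a; split; first exact: wt_pair.
  rewrite -(Lambda_pair_edge L_ge3 p_lt_q a_pq lam erefl isT).
  exact: is_Lambda_pair.
- move=> a x /wt_eq2_support [p [q [p_lt_q a_pq]]] [x_eig _].
  apply: le_trans (Lambda_pair_le L_ge3 p_lt_q a_pq lam).
  exact: (is_Lambda_pair p_lt_q a_pq lam).2 _ x_eig.
Qed.
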